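(* Let $n\ge3$, $K\ge1$, and $\underline a=(a_1,\dots,a_K)\in(\mathbb{C}^\times)^K$ with $a_k\neq a_j^{\pm1}$ for all $k\neq j$. If $a_1=-1$ and $a_k\neq1$ for every $k\ge2$, then the image of $\psi_{\underline a}$ is isomorphic to the direct sum of one copy of $so_{2n}$ and $K-1$ copies of $sl_{2n}$.
   Context: For $n\geq 3$, $M_n=(m_{i,j})$ is the $n\times n$ integer matrix with $m_{i,i}=2$, $m_{i,i+1}=m_{i+1,i}=-1$ ($1\le i\le n-1$), $m_{1,n}=m_{n,1}=1$, all other entries $0$. $\mathrm{gim}(M_n)$ is the complex Lie algebra generated by $e_i,f_i,h_i$ ($1\le i\le n$) with relations: (R1) $[h_i,e_j]=m_{i,j}e_j$, $[h_i,f_j]=-m_{i,j}f_j$, $[e_i,f_i]=h_i$ for all $i,j$; (R2) for $i\ne j$ with $m_{i,j}\le0$: $[e_i,f_j]=0=[f_i,e_j]$, $(\mathrm{ad}\,e_i)^{1-m_{i,j}}e_j=0=(\mathrm{ad}\,f_i)^{1-m_{i,j}}f_j$; (R3) for $i\ne j$ with $m_{i,j}>0$: $[e_i,e_j]=0=[f_i,f_j]$, $(\mathrm{ad}\,e_i)^{m_{i,j}+1}f_j=0=(\mathrm{ad}\,f_i)^{m_{i,j}+1}e_j$. For $a\in\mathbb{C}^\times$, $\psi_a:\mathrm{gim}(M_n)\to sl_{2n}$ is the Lie algebra homomorphism determined by $\psi_a(e_i)=E_{i,i+1}-E_{n+i+1,n+i}$, $\psi_a(f_i)=E_{i+1,i}-E_{n+i,n+i+1}$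 ($1\le i\le n-1$), $\psi_a(e_n)=E_{n,n+1}+a^{-1}E_{1,2n}$, $\psi_a(f_n)=E_{n+1,n}+aE_{2n,1}$, where $E_{i,j}$ are matrix units. For $\underline a=(a_1,\dots,a_K)$, $\psi_{\underline a}=\bigoplus_{k=1}^K\psi_{a_k}:\mathrm{gim}(M_n)\to sl_{2n}^{\oplus K}$, $x\mapsto(\psi_{a_1}(x),\dots,\psi_{a_K}(x))$. *)

From HB Require Import structures.
From mathcomp Require Import all_boot all_order all_algebra.
From mathcomp Require Import reals.
From mathcomp Require Import complex.
Set Implicit Arguments. Unset Strict Implicit. Unset Printing Implicit Defensive.
Import Order.TTheory GRing.Theory Num.Theory.
Local Open Scope ring_scope.

Section Defs.
Variable (R : realType).
Local Notation C := (R[i]).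

(* The Lie algebra sl_{2n}^{\oplus K} (and gl) realised as K-tuples of
   2n x 2n complex matrices, with componentwise commutator. *)
Definition tup (K N : nat) := {ffun 'I_K -> 'M[C]_N}.

Definition lbr (K N : nat) (x y : tup K N) : tup K N :=
  [ffun k => x k *m y k - y k *m x k].

(* Matrix unit E_{i,j}, with 1-based indices i, j in {1,..,N}. *)
Definition Emx (N i j : nat) : 'M[C]_N :=
  \matrix_(r < N, c < N) ((r.+1 == i) && (c.+1 == j))%:R.

Definition psi_e (n : nat) (a : C) (i : nat) : 'M[C]_(n.*2) :=
  if (i < n)%N then Emx (n.*2) i i.+1 - Emx (n.*2) (n + i).+1 (n + i)
  else Emx (n.*2) n n.+1 + a^-1 *: Emx (n.*2) 1 (n.*2).
Definition psi_f (n : nat) (a : C) (i : nat) : 'M[C]_(n.*2) :=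
  if (i < n)%N then Emx (n.*2) i.+1 i - Emx (n.*2) (n + i) (n + i).+1
  else Emx (n.*2) n.+1 n + a *: Emx (n.*2) (n.*2) 1.
Definition psi_h (n : nat) (a : C) (i : nat) : 'M[C]_(n.*2) :=
  psi_e n a i *m psi_f n a i - psi_f n a i *m psi_e n a i.

Definition psiA_e n K (a : 'I_K -> C) (i : nat) : tup K (n.*2) :=
  [ffun k => psi_e n (a k) i].
Definition psiA_f n K (a : 'I_K -> C) (i : nat) : tup K (n.*2) :=
  [ffun k => psi_f n (a k) i].
Definition psiA_h n K (a : 'I_K -> C) (i : nat) : tup K (n.*2) :=
  [ffun k => psi_h n (a k) i].

Inductive lie_span (K N : nat) (G : tup K N -> Prop) : tup K N -> Prop :=
  | ls_gen x : G x -> lie_span G x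
  | ls_zero : lie_span G 0
  | ls_add x y : lie_span G x -> lie_span G y -> lie_span G (x + y)
  | ls_scale (c : C) x : lie_span G x -> lie_span G (c *: x)
  | ls_br x y : lie_span G x -> lie_span G y -> lie_span G (lbr x y).

(* Image of psi_{\underline a}: gim(M_n) is generated by the e_i, f_i, h_i,
   so its image is the Lie subalgebra generated by their images. *)
Definition psi_image n K (a : 'I_K -> C) : tup K (n.*2) -> Prop :=
  lie_span (fun x => exists2 i, (1 <= i <= n)%N &
      [\/ x = psiA_e n a i, x = psiA_f n a i | x = psiA_h n a i]).

Definition so_sl_sum n K : tup K (n.*2) -> Prop :=
  fun x => forall k : 'I_K,
    if val k == 0%N then (x k)^T = - x k else \tr (x k) = 0.

Definition lie_iso K N K' N' (S : tup K N -> Prop) (T : tup K' N' -> Prop) :=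
  exists f : tup K N -> tup K' N',
    [/\ forall (c : C) x y, S x -> S y -> f (c *: x + y) = c *: f x + f y,
        forall x y, S x -> S y -> f (lbr x y) = lbr (f x) (f y),
        forall x, S x -> T (f x),
        forall x y, S x -> S y -> f x = f y -> x = y
      & forall z, T z -> exists2 x, S x & f x = z].

End Defs.

From HB Require Import structures.
From mathcomp Require Import all_boot all_order all_algebra.
From mathcomp Require Import reals complex.
From mathcomp Require Import ring zify.
Import Order.TTheory GRing.Theory Num.Theory.
Local Open Scope ring_scope.
Set Implicit Arguments. Unset Strict Implicit. Unset Printing Implicit Defensive.

(* The image of psi_a is computed slot by slot.  Brackets of the images of
   the generators with the a-independent root vectors [unitA p q] yield the
   tuples ((1 + a_k^-1) B11)_k, ((1 + a_k) C11)_k and ((1 - a_k^-1) (B_n1 - B_1n))_k.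
   The operator X |-> [[X, (1 + a) C11], (1 + a^-1) B11] rescales slot k of the
   first and third tuple by (1 + a_k)(1 + a_k^-1) = 2 + a_k + a_k^-1; these
   factors are pairwise distinct because a_k <> a_j^(+-1), so polynomials in
   the operator isolate each slot.  When a_k <> +-1 the isolated elements
   generate all of sl_2n in slot k.  Subtracting those slots from the
   generators isolates slot 0 too, where a_0 = -1 and the generators span
   so_2n in the form J y^T J = -y; conversely every element of the image is
   J-skew in slot 0 and traceless elsewhere.  Finally, conjugating slot 0 by a
   matrix Q with Q^T Q = 2J turns J-skew into skew-symmetric matrices. *)

Section MatrixUnits.
Variables (R : realType) (N : nat).
Local Notation C := R[i].
Local Notation E := (Emx R N).

Definition mxbr (X Y : 'M[C]_N) := X *m Y - Y *m X.

Lemma mxbrZl c X Y : mxbr (c *: X) Y = c *: mxbr X Y.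
Proof. by rewrite /mxbr -scalemxAl -scalemxAr scalerBr. Qed.
Lemma mxbrZr c X Y : mxbr X (c *: Y) = c *: mxbr X Y.
Proof. by rewrite /mxbr -scalemxAl -scalemxAr scalerBr. Qed.
Lemma mxbrNr X Y : mxbr X (- Y) = - mxbr X Y.
Proof. by rewrite -scaleN1r mxbrZr scaleN1r. Qed.
Lemma mulmxZl (c : C) (X Y : 'M[C]_N) : (c *: X) *m Y = c *: (X *m Y).
Proof. by rewrite scalemxAl. Qed.
Lemma mulmxZr (c : C) (X Y : 'M[C]_N) : X *m (c *: Y) = c *: (X *m Y).
Proof. by rewrite scalemxAr. Qed.
(* The coefficients left by [mul_Emx] once its index tests are decided;
   clearing them before [mxE] keeps [mxbr_units] fast. *)
Lemma scale_nat_true (X : 'M[C]_N) : (nat_of_bool true)%:R *: X = X.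
Proof. exact: scale1r. Qed.
Lemma scale_nat_false (X : 'M[C]_N) : (nat_of_bool false)%:R *: X = 0.
Proof. exact: scale0r. Qed.
Lemma mxbr0l X : mxbr 0 X = 0.
Proof. by rewrite /mxbr mul0mx mulmx0 subrr. Qed.
Lemma mxbr0r X : mxbr X 0 = 0.
Proof. by rewrite /mxbr mul0mx mulmx0 subrr. Qed.

Lemma mul_Emx i j k l :
  E i j *m E k l = ((j == k) && (0 < j <= N)%N)%:R *: E i l.
Proof.
apply/matrixP => r c; rewrite !mxE.
case: (boolP ((j == k) && _)) => [/andP[/eqP<- /andP[j0 jN]]|jk]; last first.
  rewrite mul0r big1 // => s _; rewrite !mxE.
  case: (s.+1 =P j) => [hj|]; last by rewrite andbF mul0r.
  case: (s.+1 =P k) => [hk|]; last by rewrite mulr0.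
  by move: jk; rewrite -hj -hk eqxx ltn_ord.
have jN' : (j.-1 < N)%N by rewrite prednK.
rewrite (bigD1 (Ordinal jN')) //= big1 ?addr0; last first.
  move=> s /eqP ns; rewrite !mxE; case: (s.+1 =P j) => [hs|]; last by rewrite andbF mul0r.
  by case: ns; apply: val_inj; rewrite /= -hs.
rewrite !mxE /= prednK // eqxx andbT mul1r.
by case: (r.+1 == i); case: (c.+1 == l); rewrite ?mulr1 ?mulr0.
Qed.

Lemma tr_mxbr X Y : \tr (mxbr X Y) = 0.
Proof. by rewrite /mxbr raddfB /= mxtrace_mulC subrr. Qed.

Lemma tr_Emx i j : i <> j -> \tr (E i j) = 0.
Proof.
move=> ij; rewrite /mxtrace big1 // => r _; rewrite mxE.
by case: (r.+1 =P i) => [ri|//]; case: (r.+1 =P j) => [rj|//]; case: ij; rewrite -ri -rj.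
Qed.

Lemma Emx_decomp (X : 'M[C]_N) : X = \sum_(r < N) \sum_(c < N) X r c *: E r.+1 c.+1.
Proof.
rewrite {1}(matrix_sum_delta X); apply: eq_bigr => r _; apply: eq_bigr => c _.
by congr (_ *: _); apply/matrixP => i j; rewrite !mxE !eqSS.
Qed.

Lemma traceless_Emx_decomp (X : 'M[C]_N) : \tr X = 0 ->
  X = \sum_(r < N) \sum_(c < N)
        X r c *: (if r == c then E r.+1 r.+1 - E 1 1 else E r.+1 c.+1).
Proof.
move=> trX.
have split_diag r c : X r c *: (if r == c then E r.+1 r.+1 - E 1 1 else E r.+1 c.+1) =
    X r c *: E r.+1 c.+1 - (if r == c then X r c else 0) *: E 1 1.
  by case: (r =P c) => [->|_]; rewrite ?scalerBr ?scale0r ?subr0.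
under eq_bigr do under eq_bigr do rewrite split_diag.
under eq_bigr do rewrite sumrB.
rewrite sumrB -Emx_decomp.
suff diag_sum : \sum_(r < N) \sum_(c < N) (if r == c then X r c else 0) = \tr X.
  under eq_bigr do rewrite -scaler_suml.
  by rewrite -scaler_suml diag_sum trX scale0r subr0.
apply: eq_bigr => r _; rewrite (bigD1 r) //= eqxx big1 ?addr0 // => c.
by rewrite eq_sym => /negbTE ->.
Qed.

End MatrixUnits.

(* Proves an identity between brackets of combinations of matrix units whose
   index comparisons are all decided by [lia] from the context. *)
Ltac mxbr_units :=
  rewrite /mxbr ?(mulmxDl, mulmxDr, mulNmx, mulmxN, mulmxZl, mulmxZr)
    ?(mul_Emx, mulmxZl, mulmxZr);
  repeat match goal with
  | |- context [(?x == ?y :> nat)] =>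
    first [ rewrite (_ : (x == y) = true); last (apply/eqP; rewrite -?addnn; lia)
          | rewrite (_ : (x == y) = false); last (apply/negbTE/eqP; rewrite -?addnn; lia) ]
  | |- context [(?x <= ?y)%N] =>
    first [ rewrite (_ : (x <= y)%N = true); last (apply/idP; rewrite -?addnn; lia)
          | rewrite (_ : (x <= y)%N = false); last (apply/negbTE; rewrite -ltnNge -?addnn; lia) ]
  end; rewrite ?(scale_nat_true, scale_nat_false);
  apply/matrixP => ? ?; rewrite !mxE; ring.

Lemma mxbr_Emx_swap (R : realType) N i j :
  (1 <= i <= N)%N -> (1 <= j <= N)%N -> i <> j ->
  mxbr (Emx R N i j) (Emx R N j i) = Emx R N i i - Emx R N j j.
Proof. move=> *; mxbr_units. Qed.

Section Blocks.
Variables (R : realType) (n : nat).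
Local Notation C := R[i].
Local Notation E := (Emx R n.*2).
Local Notation rg p := (1 <= p <= n)%N.

(* With J = [[0, 1], [1, 0]], the J-skew matrices are [[A, B], [C, -A^T]] with
   B, C skew; [unitA], [unitB], [unitC] are the matrix units of the three
   blocks. *)
Definition unitA p q := E p q - E (n + q) (n + p).
Definition unitB p q := E p (n + q).
Definition unitC p q := E (n + p) q.
Definition symB p q := unitB p q + unitB q p.
Definition skewB p q := unitB p q - unitB q p.
Definition symC p q := unitC p q + unitC q p.
Definition skewC p q := unitC p q - unitC q p.

Lemma psi_e_lt (c : C) i : (i < n)%N -> psi_e n c i = unitA i i.+1.
Proof. by move=> lt_in; rewrite /psi_e lt_in /unitA addnS. Qed.
Lemma psi_f_lt (c : C) i : (i < n)%N -> psi_f n c i = unitA i.+1 i.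
Proof. by move=> lt_in; rewrite /psi_f lt_in /unitA addnS. Qed.
Lemma psi_e_last (c : C) : psi_e n c n = unitB n 1 + c^-1 *: unitB 1 n.
Proof. by rewrite /psi_e ltnn /unitB addn1 addnn. Qed.
Lemma psi_f_last (c : C) : psi_f n c n = unitC 1 n + c *: unitC n 1.
Proof. by rewrite /psi_f ltnn /unitC addn1 addnn. Qed.

Lemma psi_hE (c : C) i : psi_h n c i = mxbr (psi_e n c i) (psi_f n c i).
Proof. by []. Qed.

Ltac blocks := move=> *;
  rewrite /unitA /symB /skewB /symC /skewC /unitB /unitC;
  mxbr_units.

Lemma mxbr_unitA_unitA p q s : rg p -> rg q -> rg s -> s <> p ->
  mxbr (unitA p q) (unitA q s) = unitA p s.
Proof. blocks. Qed.
Lemma mxbr_unitA_Bpair (c : C) p q m : rg p -> rg q -> rg m -> m <> q ->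
  mxbr (unitA p q) (unitB q m + c *: unitB m q) = unitB p m + c *: unitB m p.
Proof. blocks. Qed.
Lemma mxbr_unitA_Cpair (c : C) p q m : rg p -> rg q -> rg m -> m <> p ->
  mxbr (unitA p q) (unitC m p + c *: unitC p m) = - (unitC m q + c *: unitC q m).
Proof. blocks. Qed.
Lemma mxbr_unitA_B11 p : rg p -> p <> 1%N ->
  mxbr (unitA p 1) (unitB 1 1) = symB p 1.
Proof. blocks. Qed.
Lemma mxbr_unitA_symB p q m : rg p -> rg q -> rg m -> p <> m -> q <> m ->
  mxbr (unitA q m) (symB p m) = symB p q.
Proof. blocks. Qed.
Lemma mxbr_unitA_C11 p : rg p -> p <> 1%N ->
  mxbr (unitA 1 p) (unitC 1 1) = - symC p 1.
Proof. blocks. Qed.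
Lemma mxbr_unitA_symC p q m : rg p -> rg q -> rg m -> p <> m -> q <> m ->
  mxbr (unitA m q) (symC p m) = - symC p q.
Proof. blocks. Qed.
Lemma mxbr_unitA_skewB p q m : rg p -> rg q -> rg m -> p <> m -> q <> m ->
  mxbr (unitA p m) (skewB m q) = skewB p q.
Proof. blocks. Qed.
Lemma mxbr_unitA_skewC p q m : rg p -> rg q -> rg m -> p <> m -> q <> m ->
  mxbr (unitA m q) (skewC p m) = - skewC p q.
Proof. blocks. Qed.
Lemma mxbr_unitA_Emx_l p s m : rg p -> rg s -> rg m -> p <> m -> s <> m -> p <> s ->
  mxbr (unitA m s) (E p m) = - E p s.
Proof. blocks. Qed.
Lemma mxbr_unitA_Emx_r p s m : rg p -> rg s -> rg m -> m <> p -> s <> p -> s <> m ->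
  mxbr (unitA m p) (E p s) = E m s.
Proof. blocks. Qed.

Lemma mxbr_B11_C11 : rg 1 -> mxbr (unitB 1 1) (unitC 1 1) = E 1 1 - E (n + 1) (n + 1).
Proof. blocks. Qed.
Lemma mxbr_H11_B11 : rg 1 ->
  mxbr (E 1 1 - E (n + 1) (n + 1)) (unitB 1 1) = 2%:R *: unitB 1 1.
Proof. blocks. Qed.
Lemma mxbr_H11_C11 : rg 1 ->
  mxbr (E 1 1 - E (n + 1) (n + 1)) (unitC 1 1) = - 2%:R *: unitC 1 1.
Proof. blocks. Qed.
Lemma mxbr_unitB_C11 p : rg p -> p <> 1%N ->
  mxbr (unitB p 1) (unitC 1 1) = E p 1.
Proof. blocks. Qed.
Lemma mxbr_skewB_C11 p : rg p -> p <> 1%N ->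
  mxbr (skewB p 1) (unitC 1 1) = E p 1 + E (n + 1) (n + p).
Proof. blocks. Qed.
Lemma mxbr_Emx_B11 p : rg p -> p <> 1%N ->
  mxbr (E p 1 + E (n + 1) (n + p)) (unitB 1 1) = skewB p 1.
Proof. blocks. Qed.
Lemma skewB_of_Bpair (c : C) p : rg p -> p <> 1%N ->
  2%:R *: (unitB p 1 + c *: unitB 1 p) - (1 + c) *: mxbr (unitA p 1) (unitB 1 1)
  = (1 - c) *: skewB p 1.
Proof. blocks. Qed.
Lemma mxbr_Emx_symC r v w : rg r -> rg v -> rg w -> r <> v -> r <> w ->
  mxbr (E r v) (symC r w) = - unitC w v.
Proof. blocks. Qed.
Lemma mxbr_unitC_unitB p q m : rg p -> rg q -> rg m -> p <> q ->
  mxbr (unitC p m) (unitB m q) = E (n + p) (n + q).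
Proof. blocks. Qed.
Lemma mxbr_unitA_skew_cartan p q : rg p -> rg q -> p <> q ->
  mxbr (unitA p q) (unitA q p) + mxbr (skewB p q) (skewC q p)
  = 2%:R *: (E p p - E (n + p) (n + p)).
Proof. blocks. Qed.

End Blocks.

Lemma sum_mul_eq (F : fieldType) m (g : 'I_m -> F) (x : 'I_m) :
  \sum_r g r * (r == x)%:R = g x.
Proof.
rewrite (bigD1 x) //= eqxx mulr1 big1 ?addr0 // => r /negbTE ->.
by rewrite mulr0.
Qed.

Section Orthogonal.
Variables (R : realType) (n : nat).
Local Notation C := R[i].
Local Notation N := n.*2.
Local Notation E := (Emx R N).

Definition mirror (i : nat) : nat := if (i <= n)%N then (i + n)%N else (i - n)%N.

Lemma mirror_lo i : (i <= n)%N -> mirror i = (i + n)%N.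
Proof. by rewrite /mirror => ->. Qed.
Lemma mirror_hi i : (n < i)%N -> mirror i = (i - n)%N.
Proof. by move=> lt_ni; rewrite /mirror leqNgt lt_ni. Qed.

Lemma mirrorK i : (1 <= i <= N)%N -> mirror (mirror i) = i.
Proof.
rewrite -addnn => /andP[i1 iN].
by case: (leqP i n) => h; [rewrite (mirror_lo h) mirror_hi | rewrite (mirror_hi h) mirror_lo]; lia.
Qed.

Lemma mirror_range i : (1 <= i <= N)%N -> (1 <= mirror i <= N)%N.
Proof.
rewrite -addnn => /andP[i1 iN].
by case: (leqP i n) => h; [rewrite mirror_lo | rewrite mirror_hi]; lia.
Qed.

Lemma mirror_sym i j : (1 <= i <= N)%N -> (1 <= j <= N)%N ->
  (mirror i == j) = (i == mirror j).
Proof. by move=> hi hj; apply/eqP/eqP => [<-|->]; rewrite mirrorK. Qed.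

Lemma mirror_inj i j : (1 <= i <= N)%N -> (1 <= j <= N)%N ->
  (mirror i == mirror j) = (i == j).
Proof. by move=> hi hj; rewrite mirror_sym ?mirrorK ?mirror_range. Qed.

Lemma mirror_ord_subproof (r : 'I_N) : ((mirror r.+1).-1 < N)%N.
Proof. by have := @mirror_range r.+1 (ltn_ord r); case: (mirror _). Qed.
Definition mirror_ord (r : 'I_N) : 'I_N := Ordinal (mirror_ord_subproof r).

Lemma mirror_ordS (r : 'I_N) : (mirror_ord r).+1 = mirror r.+1.
Proof. by rewrite /= prednK //; case/andP: (@mirror_range r.+1 (ltn_ord r)). Qed.

Lemma mirror_ordK : involutive mirror_ord.
Proof.
move=> r; apply/val_inj/succn_inj.
by rewrite [LHS]mirror_ordS mirror_ordS mirrorK ?ltn_ord.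
Qed.

Lemma eq_mirror_ord (r c : 'I_N) : (c == mirror_ord r) = (r == mirror_ord c).
Proof. by apply/eqP/eqP => ->; rewrite mirror_ordK. Qed.

Lemma mirror_ord_lt (r : 'I_N) : (mirror_ord r < n)%N = ~~ (r < n)%N.
Proof.
have lt_r : (r < n + n)%N by rewrite addnn.
move: lt_r (mirror_ordS r).
by case: (leqP r.+1 n) => h; [rewrite mirror_lo | rewrite mirror_hi] => // lt_r e;
  apply/idP/idP; lia.
Qed.

Definition Jmx : 'M[C]_N := \matrix_(r, c) (c == mirror_ord r)%:R.

Lemma mulJmx (A : 'M[C]_N) r c : (Jmx *m A) r c = A (mirror_ord r) c.
Proof.
rewrite mxE -[RHS](sum_mul_eq (A^~ c)).
by apply: eq_bigr => s _; rewrite mxE mulrC.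
Qed.

Lemma mulmxJ (A : 'M[C]_N) r c : (A *m Jmx) r c = A r (mirror_ord c).
Proof. by rewrite mxE; under eq_bigr do rewrite mxE eq_mirror_ord; rewrite sum_mul_eq. Qed.

Lemma mulJJ : Jmx *m Jmx = 1%:M.
Proof. by apply/matrixP => r c; rewrite mulJmx !mxE mirror_ordK eq_sym. Qed.

Lemma tr_Jmx : Jmx^T = Jmx.
Proof. by apply/matrixP => r c; rewrite !mxE eq_mirror_ord. Qed.

Definition J_skew (y : 'M[C]_N) := Jmx *m y^T *m Jmx = - y.

Lemma J_skewE y :
  J_skew y <-> forall r c, y (mirror_ord c) (mirror_ord r) = - y r c.
Proof.
split => [/matrixP h r c | h]; last by apply/matrixP => r c; rewrite mulmxJ mulJmx !mxE h.
by move: (h r c); rewrite mulmxJ mulJmx !mxE.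
Qed.

Lemma J_skew0 : J_skew 0.
Proof. by rewrite /J_skew trmx0 mulmx0 mul0mx oppr0. Qed.

Lemma J_skewD x y : J_skew x -> J_skew y -> J_skew (x + y).
Proof. by rewrite /J_skew => hx hy; rewrite linearD /= mulmxDr mulmxDl hx hy opprD. Qed.

Lemma J_skewZ c x : J_skew x -> J_skew (c *: x).
Proof. by rewrite /J_skew => hx; rewrite linearZ /= -scalemxAr -scalemxAl hx scalerN. Qed.

Lemma J_skew_mxbr x y : J_skew x -> J_skew y -> J_skew (mxbr x y).
Proof.
rewrite /J_skew /mxbr => hx hy.
have conjM A B : Jmx *m (A^T *m B^T) *m Jmx = (Jmx *m A^T *m Jmx) *m (Jmx *m B^T *m Jmx).
  by rewrite !mulmxA -(mulmxA _ Jmx Jmx) mulJJ mulmx1.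
rewrite linearB /= !trmx_mul mulmxBr mulmxBl !conjM hx hy.
by rewrite !(mulNmx, mulmxN, opprK) opprB.
Qed.

Lemma J_skew_Emx i j : (1 <= i <= N)%N -> (1 <= j <= N)%N ->
  J_skew (E i j - E (mirror j) (mirror i)).
Proof.
move=> hi hj; apply/J_skewE => r c.
have hr : (1 <= r.+1 <= N)%N by rewrite ltn_ord.
have hc : (1 <= c.+1 <= N)%N by rewrite ltn_ord.
rewrite !mxE !mirror_ordS (mirror_sym hc hi) (mirror_sym hr hj).
rewrite (mirror_inj hc hj) (mirror_inj hr hi) -!mulnb !natrM; ring.
Qed.

Lemma J_skew_decomp y : J_skew y ->
  y = 2%:R^-1 *: \sum_(r < N) \sum_(c < N)
        y r c *: (E r.+1 c.+1 - E (mirror c.+1) (mirror r.+1)).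
Proof.
move=> /J_skewE hy; apply/matrixP => i j; rewrite mxE summxE.
have entry r c : (y r c *: (E r.+1 c.+1 - E (mirror c.+1) (mirror r.+1))) i j =
    y r c * (c == j)%:R * (r == i)%:R - y r c * (r == mirror_ord j)%:R * (c == mirror_ord i)%:R.
  rewrite !mxE !eqSS -!mirror_ordS !eqSS !val_eqE (eq_mirror_ord c i) (eq_mirror_ord r j).
  by rewrite -!mulnb !natrM (eq_sym i r) (eq_sym j c); ring.
under eq_bigr do rewrite summxE.
under eq_bigr do under eq_bigr do rewrite entry.
under eq_bigr do rewrite sumrB -!mulr_suml !sum_mul_eq.
rewrite sumrB !sum_mul_eq hy opprK -[y i j + y i j]mulr2n -(mulr_natl (y i j) 2).
by rewrite mulrA mulVf ?mul1r // pnatr_eq0.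
Qed.

(* [Qmx^T *m Qmx = 2 J], so conjugation by [Qmx] turns J-skew matrices into
   skew-symmetric ones. *)
Definition Qdiag (r : 'I_N) : C := if (r < n)%N then 1 else - 'i.
Definition Qanti (r : 'I_N) : C := if (r < n)%N then 1 else 'i.
Definition Qmx : 'M[C]_N :=
  \matrix_(r, c) (Qdiag r * (c == r)%:R + Qanti r * (c == mirror_ord r)%:R).

Lemma tr_Qmx_Qmx : Qmx^T *m Qmx = 2%:R *: Jmx.
Proof.
apply/matrixP => r c; rewrite !mxE.
have entry s : Qmx^T r s * Qmx s c =
    Qdiag s * Qmx s c * (s == r)%:R + Qanti s * Qmx s c * (s == mirror_ord r)%:R.
  by rewrite !mxE (eq_sym r s) -eq_mirror_ord; ring.
under eq_bigr do rewrite entry.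
rewrite big_split /= !sum_mul_eq !mxE mirror_ordK /Qdiag /Qanti mirror_ord_lt.
have i2 : ('i : C) * 'i = -1 by rewrite -expr2 sqr_i.
by case: (r < n)%N; case: (c == r); case: (c == mirror_ord r);
  rewrite /= ?(mulrN, mulNr, mulr1, mul1r, mulr0, mul0r, addr0, add0r, i2, opprK, mulrDr); ring.
Qed.

Definition Qinv : 'M[C]_N := 2%:R^-1 *: (Jmx *m Qmx^T).

Lemma mulQinvQ : Qinv *m Qmx = 1%:M.
Proof.
rewrite /Qinv -scalemxAl -mulmxA tr_Qmx_Qmx -scalemxAr mulJJ scalerA mulVf ?scale1r //.
by rewrite pnatr_eq0.
Qed.

Lemma tr_Qinv : Qinv^T = 2%:R^-1 *: (Qmx *m Jmx).
Proof. by rewrite /Qinv linearZ /= trmx_mul trmxK tr_Jmx. Qed.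

Lemma J_skew_conj y : J_skew y -> (Qmx *m y *m Qinv)^T = - (Qmx *m y *m Qinv).
Proof.
rewrite /J_skew => hy.
have hyJ : Jmx *m y^T = - (y *m Jmx).
  by rewrite -[Jmx *m y^T]mulmx1 -mulJJ mulmxA hy mulNmx.
rewrite !trmx_mul tr_Qinv /Qinv -scalemxAl -scalemxAr.
rewrite (mulmxA (Qmx *m Jmx)) -(mulmxA Qmx Jmx) hyJ mulmxN mulNmx.
by rewrite scalerN !mulmxA.
Qed.

Lemma skew_conj z : z^T = - z -> J_skew (Qinv *m z *m Qmx).
Proof.
rewrite /J_skew => hz.
rewrite !trmx_mul tr_Qinv hz /Qinv.
do 2!rewrite -?scalemxAl -?scalemxAr ?(mulNmx, mulmxN, scalerN).
by rewrite !mulmxA -(mulmxA _ Jmx Jmx) mulJJ mulmx1.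
Qed.

End Orthogonal.

Lemma add_inv_inj (F : fieldType) (x y : F) : x != 0 -> y != 0 ->
  (1 + x) * (1 + x^-1) = (1 + y) * (1 + y^-1) -> x = y \/ x * y = 1.
Proof.
move=> x0 y0 e.
have : (x - y) * (x * y - 1) = 0.
  have -> : (x - y) * (x * y - 1) =
      x * y * ((1 + x) * (1 + x^-1) - (1 + y) * (1 + y^-1)) by field; rewrite x0 y0.
  by rewrite e subrr mulr0.
by move/eqP; rewrite mulf_eq0 !subr_eq0 => /orP[] /eqP; [left | right].
Qed.

Lemma add1_inv_neq0 (F : fieldType) (x : F) : x != 0 -> x != -1 -> 1 + x^-1 != 0.
Proof.
move=> x0 xN1; have -> : 1 + x^-1 = (x + 1) / x by field; rewrite x0.
by rewrite mulf_neq0 ?invr_eq0 // addr_eq0.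
Qed.

Lemma sub1_inv_neq0 (F : fieldType) (x : F) : x != 0 -> x != 1 -> 1 - x^-1 != 0.
Proof.
move=> x0 x1; have -> : 1 - x^-1 = (x - 1) / x by field; rewrite x0.
by rewrite mulf_neq0 ?invr_eq0 // subr_eq0.
Qed.

Section Generators.
Variables (R : realType) (n : nat).
Local Notation C := R[i].
Local Notation N := n.*2.
Local Notation E := (Emx R N).
Local Notation rg p := (1 <= p <= n)%N.
Local Notation mirror := (mirror n).
Local Notation J_skew := (@J_skew R n).

Lemma unitA_mirror p q : rg p -> rg q -> unitA R n p q = E p q - E (mirror q) (mirror p).
Proof. by move=> /andP[_ hp] /andP[_ hq]; rewrite /unitA !mirror_lo // ![(_ + n)%N]addnC. Qed.

Lemma skewB_mirror p q : rg p -> rg q ->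
  skewB R n p q = E p (n + q) - E (mirror (n + q)) (mirror p).
Proof.
move=> /andP[_ hp] /andP[q1 _]; have hq : (n < n + q)%N by lia.
by rewrite /skewB /unitB (mirror_lo hp) (mirror_hi hq) addKn (addnC p n).
Qed.

Lemma skewC_mirror p q : rg p -> rg q ->
  skewC R n p q = E (n + p) q - E (mirror q) (mirror (n + p)).
Proof.
move=> /andP[p1 _] /andP[_ hq]; have hp : (n < n + p)%N by lia.
by rewrite /skewC /unitC (mirror_lo hq) (mirror_hi hp) addKn (addnC q n).
Qed.

Lemma tr_psi_e (c : C) i : (1 <= i <= n)%N -> \tr (psi_e n c i) = 0.
Proof.
move=> /andP[i1 iN]; case: (ltnP i n) => h.
  by rewrite psi_e_lt // /unitA raddfB /= !tr_Emx ?subrr //; lia.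
by rewrite (_ : i = n) ?psi_e_last /unitB ?mxtraceD ?mxtraceZ ?tr_Emx ?mulr0 ?addr0 //; lia.
Qed.

Lemma tr_psi_f (c : C) i : (1 <= i <= n)%N -> \tr (psi_f n c i) = 0.
Proof.
move=> /andP[i1 iN]; case: (ltnP i n) => h.
  by rewrite psi_f_lt // /unitA raddfB /= !tr_Emx ?subrr //; lia.
by rewrite (_ : i = n) ?psi_f_last /unitC ?mxtraceD ?mxtraceZ ?tr_Emx ?mulr0 ?addr0 //; lia.
Qed.

Lemma J_skew_psi_e i : (1 <= i <= n)%N -> J_skew (psi_e n (-1) i).
Proof.
move=> /andP[i1 iN]; case: (ltnP i n) => h.
  rewrite psi_e_lt // unitA_mirror; [apply: J_skew_Emx | ..];
    by rewrite -?addnn; apply/andP; split; lia.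
rewrite (_ : i = n); last by lia.
rewrite psi_e_last invrN1 scaleN1r -/(skewB R n n 1) skewB_mirror; try (apply/andP; split; lia).
by apply: J_skew_Emx; rewrite -?addnn; apply/andP; split; lia.
Qed.

Lemma J_skew_psi_f i : (1 <= i <= n)%N -> J_skew (psi_f n (-1) i).
Proof.
move=> /andP[i1 iN]; case: (ltnP i n) => h.
  rewrite psi_f_lt // unitA_mirror; [apply: J_skew_Emx | ..];
    by rewrite -?addnn; apply/andP; split; lia.
rewrite (_ : i = n); last by lia.
rewrite psi_f_last scaleN1r -/(skewC R n 1 n) skewC_mirror; try (apply/andP; split; lia).
by apply: J_skew_Emx; rewrite -?addnn; apply/andP; split; lia.
Qed.

End Generators.

Section Image.
Variables (R : realType) (n K : nat) (a : 'I_K -> R[i]).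
Hypothesis n_ge3 : (3 <= n)%N.
Local Notation C := R[i].
Local Notation N := n.*2.
Local Notation E := (Emx R N).
Local Notation rg p := (1 <= p <= n)%N.
Local Notation unitA := (unitA R n).
Local Notation unitB := (unitB R n).
Local Notation unitC := (unitC R n).
Local Notation symB := (symB R n).
Local Notation skewB := (skewB R n).
Local Notation symC := (symC R n).
Local Notation skewC := (skewC R n).

Definition in_image (F : 'I_K -> 'M[C]_N) := psi_image a [ffun k => F k].

Lemma in_image_ext F G : (forall k, F k = G k) -> in_image F -> in_image G.
Proof.
by move=> FG; rewrite /in_image (_ : [ffun k => G k] = [ffun k => F k]) //; apply/ffunP => k;
  rewrite !ffunE FG.
Qed.

Lemma in_image0 : in_image (fun _ => 0).
Proof.
rewrite /in_image (_ : [ffun _ => 0] = 0); first exact: ls_zero.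
by apply/ffunP => k; rewrite !ffunE.
Qed.

Lemma in_imageD F G : in_image F -> in_image G -> in_image (fun k => F k + G k).
Proof.
move=> hF hG; rewrite /in_image (_ : [ffun k => _] = [ffun k => F k] + [ffun k => G k]).
  exact: ls_add.
by apply/ffunP => k; rewrite !ffunE.
Qed.

Lemma in_imageZ c F : in_image F -> in_image (fun k => c *: F k).
Proof.
move=> hF; rewrite /in_image (_ : [ffun k => _] = c *: [ffun k => F k]).
  exact: ls_scale.
by apply/ffunP => k; rewrite !ffunE.
Qed.

Lemma in_image_mxbr F G : in_image F -> in_image G -> in_image (fun k => mxbr (F k) (G k)).
Proof.
move=> hF hG; rewrite /in_image (_ : [ffun k => _] = lbr [ffun k => F k] [ffun k => G k]).
  exact: ls_br.
by apply/ffunP => k; rewrite !ffunE.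
Qed.

Lemma in_image_e i : rg i -> in_image (fun k => psi_e n (a k) i).
Proof. by move=> hi; apply: ls_gen; exists i => //; apply: Or31. Qed.
Lemma in_image_f i : rg i -> in_image (fun k => psi_f n (a k) i).
Proof. by move=> hi; apply: ls_gen; exists i => //; apply: Or32. Qed.

Lemma in_image_unitA_chain p d : (1 <= p)%N -> (p + d < n)%N ->
  in_image (fun _ => unitA p (p + d).+1) /\ in_image (fun _ => unitA (p + d).+1 p).
Proof.
move=> p1; elim: d => [|d IH] lt_pd.
  rewrite addn0; have hp : (p < n)%N by rewrite addn0 in lt_pd.
  split; [apply: in_image_ext (in_image_e _) | apply: in_image_ext (in_image_f _)];
    by move=> *; rewrite ?psi_e_lt ?psi_f_lt //; apply/andP; split; lia.
have [IHup IHdown] : _ /\ _ := IH ltac:(lia).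
have hm : rg (p + d).+1 by apply/andP; split; lia.
split.
  apply: in_image_ext (in_image_mxbr IHup (in_image_e hm)) => k.
  by rewrite psi_e_lt ?mxbr_unitA_unitA ?addnS //; try (apply/andP; split); lia.
apply: in_image_ext (in_image_mxbr (in_image_f hm) IHdown) => k.
by rewrite psi_f_lt ?mxbr_unitA_unitA ?addnS //; try (apply/andP; split); lia.
Qed.

Lemma in_image_unitA p q : rg p -> rg q -> p <> q -> in_image (fun _ => unitA p q).
Proof.
move=> /andP[p1 pn] /andP[q1 qn] pq.
case: (ltngtP p q) => [lt_pq|lt_qp|//].
  have [+ _] := @in_image_unitA_chain p (q - p).-1 p1 ltac:(lia).
  by rewrite (_ : (p + (q - p).-1).+1 = q)%N //; lia.
have [_ +] := @in_image_unitA_chain q (p - q).-1 q1 ltac:(lia).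
by rewrite (_ : (q + (p - q).-1).+1 = p)%N //; lia.
Qed.

Definition single k (X : 'M[C]_N) (j : 'I_K) := if j == k then X else 0.
Definition in_slot k X := in_image (single k X).

Lemma in_slot0 k : in_slot k 0.
Proof. by apply: in_image_ext in_image0 => j; rewrite /single; case: ifP. Qed.
Lemma in_slotD k X Y : in_slot k X -> in_slot k Y -> in_slot k (X + Y).
Proof.
move=> hX hY; apply: in_image_ext (in_imageD hX hY) => j.
by rewrite /single; case: ifP; rewrite ?addr0.
Qed.
Lemma in_slotZ k c X : in_slot k X -> in_slot k (c *: X).
Proof.
move=> hX; apply: in_image_ext (in_imageZ c hX) => j.
by rewrite /single; case: ifP; rewrite ?scaler0.
Qed.
Lemma in_slotN k X : in_slot k X -> in_slot k (- X).
Proof. by rewrite -scaleN1r; apply: in_slotZ. Qed.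

Lemma in_slot_mxbrl k G X : in_image G -> in_slot k X -> in_slot k (mxbr (G k) X).
Proof.
move=> hG hX; apply: in_image_ext (in_image_mxbr hG hX) => j; rewrite /single.
by case: (j =P k) => [->|_]; rewrite ?mxbr0r.
Qed.
Lemma in_slot_mxbrr k G X : in_slot k X -> in_image G -> in_slot k (mxbr X (G k)).
Proof.
move=> hX hG; apply: in_image_ext (in_image_mxbr hX hG) => j; rewrite /single.
by case: (j =P k) => [->|_]; rewrite ?mxbr0l.
Qed.
Lemma in_slot_mxbr k X Y : in_slot k X -> in_slot k Y -> in_slot k (mxbr X Y).
Proof.
move=> hX hY; apply: in_image_ext (in_image_mxbr hX hY) => j; rewrite /single.
by case: ifP; rewrite ?mxbr0l.
Qed.
Lemma in_slot_unitA k p q X : in_slot k X -> rg p -> rg q -> p <> q ->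
  in_slot k (mxbr (unitA p q) X).
Proof.
by move=> hX hp hq pq; apply: (in_slot_mxbrl (G := fun _ => _)) hX; apply: in_image_unitA.
Qed.

Ltac side := solve [assumption | lia | apply/andP; split; lia].

Lemma in_slot_sum k (I : finType) (P : pred I) (f : I -> 'M[C]_N) :
  (forall i, P i -> in_slot k (f i)) -> in_slot k (\sum_(i | P i) f i).
Proof. by move=> h; apply: big_ind => //; [exact: in_slot0 | exact: in_slotD]. Qed.

Lemma in_image_sum_single (P : pred 'I_K) F : (forall k, P k -> in_slot k (F k)) ->
  in_image (fun j => if P j then F j else 0).
Proof.
move=> h; have : in_image (fun j => \sum_(k <- index_enum _ | P k) single k (F k) j).
  elim: (index_enum _) => [|k s IH]; first by apply: in_image_ext in_image0 => j; rewrite big_nil.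
  case: (boolP (P k)) => Pk; last by apply: in_image_ext IH => j; rewrite big_cons (negbTE Pk).
  by apply: in_image_ext (in_imageD (h k Pk) IH) => j; rewrite big_cons Pk.
apply: in_image_ext => j; case: (boolP (P j)) => Pj.
  rewrite (bigD1 j) //= /single eqxx big1 ?addr0 // => k /andP[_ kj].
  by rewrite eq_sym (negbTE kj).
by rewrite big1 // => k Pk; rewrite /single; case: (j =P k) => // jk; rewrite jk Pk in Pj.
Qed.

Lemma in_image_of_slots F : (forall k, in_slot k (F k)) -> in_image F.
Proof. by move=> h; apply: in_image_ext (in_image_sum_single (P := predT) (fun k _ => h k)). Qed.

Lemma in_slot_of_others k F : in_image F ->
  (forall j, j != k -> in_slot j (F j)) -> in_slot k (F k).
Proof.
move=> hF /in_image_sum_single hothers.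
apply: in_image_ext (in_imageD hF (in_imageZ (-1) hothers)) => j.
by rewrite /single scaleN1r; case: (j =P k) => [->|_]; rewrite /= ?subr0 ?subrr.
Qed.

Lemma in_slot_separate X (phi u : 'I_K -> C) k :
  in_image (fun j => phi j *: X) ->
  (forall psi, in_image (fun j => psi j *: X) -> in_image (fun j => (u j * psi j) *: X)) ->
  phi k != 0 -> (forall j, j != k -> u j != u k) -> in_slot k X.
Proof.
(* Apply the polynomial prod_(i <> k) (u - u_i), which vanishes on every other slot. *)
move=> hphi hu phik uk.
have hprod s : in_image (fun j => (phi j * \prod_(i <- s) (u j - u i)) *: X).
  elim: s => [|i s IH]; first by apply: in_image_ext hphi => j; rewrite big_nil mulr1.
  apply: in_image_ext (in_imageD (hu _ IH) (in_imageZ (- u i) IH)) => j.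
  by rewrite big_cons scalerA -scalerDl; congr (_ *: _); ring.
pose s := [seq i <- enum 'I_K | i != k].
have Pk : phi k * \prod_(i <- s) (u k - u i) != 0.
  rewrite mulf_neq0 // prodf_seq_neq0; apply/allP => j; rewrite mem_filter => /andP[jk _].
  by rewrite subr_eq0 eq_sym uk.
apply: in_image_ext (in_imageZ (phi k * \prod_(i <- s) (u k - u i))^-1 (hprod s)) => j.
rewrite /single scalerA; case: (j =P k) => [->|/eqP jk]; first by rewrite mulVf ?scale1r.
suff -> : \prod_(i <- s) (u j - u i) = 0 by rewrite mulr0 mulr0 scale0r.
apply/eqP; rewrite prodf_seq_eq0; apply/hasP; exists j; last by rewrite /= subrr.
by rewrite mem_filter jk mem_enum.
Qed.

Let rg1 : rg 1. Proof. by apply/andP; split; lia. Qed.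
Let rgn : rg n. Proof. by apply/andP; split; lia. Qed.

Lemma third_index x y : exists r, [/\ rg r, r <> x & r <> y].
Proof.
case: (boolP ((x != 1) && (y != 1))%N) => [|h1]; first by exists 1%N; split; side.
case: (boolP ((x != 2) && (y != 2))%N) => [|h2]; first by exists 2%N; split; side.
by exists 3%N; split; side.
Qed.

Section Generation.
Variable k : 'I_K.

Lemma in_slot_symB : in_slot k (unitB 1 1) -> forall p q, rg p -> rg q -> in_slot k (symB p q).
Proof.
move=> hB.
have hp1 r : rg r -> r <> 1%N -> in_slot k (symB r 1).
  by move=> hr r1; rewrite -mxbr_unitA_B11 //; apply: in_slot_unitA hB _ _ _; side.
move=> p q hp hq; case: (p =P 1%N) => [->|p1]; case: (q =P 1%N) => [->|q1].
- exact: in_slotD.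
- by rewrite /symB addrC; apply: hp1.
- exact: hp1.
- by rewrite -(@mxbr_unitA_symB _ _ p q 1) //; apply: in_slot_unitA (hp1 _ _ _) _ _ _; side.
Qed.

Lemma in_slot_skewB : in_slot k (skewB n 1) -> forall p q, rg p -> rg q -> in_slot k (skewB p q).
Proof.
move=> hS.
have hp1 p : rg p -> in_slot k (skewB p 1).
  move=> hp; case: (p =P n) => [->//|pn]; case: (p =P 1%N) => [->|p1].
    by rewrite /skewB subrr; apply: in_slot0.
  by rewrite -(@mxbr_unitA_skewB _ _ p 1 n) //; try side; apply: in_slot_unitA hS _ _ _; side.
have h1q q : rg q -> in_slot k (skewB 1 q).
  by move=> hq; rewrite /skewB -opprB; apply/in_slotN/hp1.
move=> p q hp hq; case: (p =P 1%N) => [->|p1]; first exact: h1q.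
case: (q =P 1%N) => [->|q1]; first exact: hp1.
by rewrite -(@mxbr_unitA_skewB _ _ p q 1) //; apply: in_slot_unitA (h1q _ _) _ _ _; side.
Qed.

Lemma in_slot_unitB : in_slot k (unitB 1 1) -> in_slot k (skewB n 1) ->
  forall p q, rg p -> rg q -> in_slot k (unitB p q).
Proof.
move=> hB hS p q hp hq.
have := in_slotZ 2%:R^-1 (in_slotD (in_slot_symB hB hp hq) (in_slot_skewB hS hp hq)).
rewrite /symB /skewB addrACA subrr addr0 -mulr2n -(scaler_nat 2 (unitB p q)).
by rewrite scalerA mulVf ?scale1r // pnatr_eq0.
Qed.

Lemma in_slot_symC : in_slot k (unitC 1 1) -> forall p q, rg p -> rg q -> in_slot k (symC p q).
Proof.
move=> hC.
have hp1 r : rg r -> r <> 1%N -> in_slot k (symC r 1).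
  move=> hr r1; rewrite -[symC r 1]opprK -mxbr_unitA_C11 //.
  by apply/in_slotN; apply: in_slot_unitA hC _ _ _; side.
move=> p q hp hq; case: (p =P 1%N) => [->|p1]; case: (q =P 1%N) => [->|q1].
- exact: in_slotD.
- by rewrite /symC addrC; apply: hp1.
- exact: hp1.
- rewrite -[symC p q]opprK -(@mxbr_unitA_symC _ _ p q 1) //.
  by apply/in_slotN; apply: in_slot_unitA (hp1 _ _ _) _ _ _; side.
Qed.

Lemma in_slot_skewC : in_slot k (skewC 1 n) -> forall p q, rg p -> rg q -> in_slot k (skewC p q).
Proof.
move=> hS.
have h1q q : rg q -> in_slot k (skewC 1 q).
  move=> hq; case: (q =P n) => [->//|qn]; case: (q =P 1%N) => [->|q1].
    by rewrite /skewC subrr; apply: in_slot0.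
  rewrite -[skewC 1 q]opprK -(@mxbr_unitA_skewC _ _ 1 q n) //; try side.
  by apply/in_slotN; apply: in_slot_unitA hS _ _ _; side.
have hp1 p : rg p -> in_slot k (skewC p 1).
  by move=> hp; rewrite /skewC -opprB; apply/in_slotN/h1q.
move=> p q hp hq; case: (p =P 1%N) => [->|p1]; first exact: h1q.
case: (q =P 1%N) => [->|q1]; first exact: hp1.
rewrite -[skewC p q]opprK -(@mxbr_unitA_skewC _ _ p q 1) //.
by apply/in_slotN; apply: in_slot_unitA (hp1 _ _) _ _ _; side.
Qed.

Hypotheses (hB : in_slot k (unitB 1 1)) (hS : in_slot k (skewB n 1))
  (hC : in_slot k (unitC 1 1)).

Lemma in_slot_Emx_A p s : rg p -> rg s -> p <> s -> in_slot k (E p s).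
Proof.
have hp1 r : rg r -> r <> 1%N -> in_slot k (E r 1).
  by move=> hr r1; rewrite -mxbr_unitB_C11 //; apply: in_slot_mxbr (in_slot_unitB hB hS hr rg1) hC.
have hps r t : rg r -> rg t -> r <> 1%N -> t <> 1%N -> r <> t -> in_slot k (E r t).
  move=> hr ht r1 t1 rt; rewrite -[E r t]opprK -(@mxbr_unitA_Emx_l _ _ r t 1) //.
  by apply/in_slotN; apply: in_slot_unitA (hp1 _ _ _) _ _ _; side.
move=> hp hs; case: (s =P 1%N) => [->|s1] ps; first exact: hp1 hp ps.
case: (p =P 1%N) => [->|p1]; last exact: hps.
have [r [hr r1 rs]] := third_index 1 s.
rewrite -(@mxbr_unitA_Emx_r _ _ r s 1); try side.
by apply: in_slot_unitA (hps r s hr hs r1 s1 rs) _ _ _; side.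
Qed.

Lemma in_slot_unitC p q : rg p -> rg q -> in_slot k (unitC p q).
Proof.
move=> hp hq; have [r [hr rq rp]] := third_index q p.
rewrite -[unitC p q]opprK -(@mxbr_Emx_symC _ _ r q p) //.
by apply/in_slotN/in_slot_mxbr; [apply: in_slot_Emx_A | apply: in_slot_symC].
Qed.

Lemma in_slot_offdiag i j : (1 <= i <= N)%N -> (1 <= j <= N)%N -> i <> j -> in_slot k (E i j).
Proof.
move=> hi hj ij; have hN : N = (n + n)%N by rewrite addnn.
case: (leqP i n) => hin; case: (leqP j n) => hjn.
- by apply: in_slot_Emx_A => //; side.
- rewrite (_ : j = n + (j - n))%N; last by lia.
  by apply: in_slot_unitB => //; side.
- rewrite (_ : i = n + (i - n))%N; last by lia.
  by apply: in_slot_unitC; side.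
- have -> : i = (n + (i - n))%N by lia.
  have -> : j = (n + (j - n))%N by lia.
  rewrite -(@mxbr_unitC_unitB _ _ (i - n) (j - n) 1) //; try side.
  by apply: in_slot_mxbr; [apply: in_slot_unitC | apply: in_slot_unitB]; side.
Qed.

Lemma in_slot_traceless X : \tr X = 0 -> in_slot k X.
Proof.
move=> /traceless_Emx_decomp ->; apply: in_slot_sum => r _; apply: in_slot_sum => c _.
apply: in_slotZ; have := ltn_ord r; have := ltn_ord c; have hN : N = (n + n)%N by rewrite addnn.
move=> hc hr.
case: (r =P c) => [_|rc].
  case: (r =P 0%N :> nat) => [r0|r0]; first by rewrite r0 subrr; apply: in_slot0.
  rewrite -mxbr_Emx_swap; try side.
  by apply: in_slot_mxbr; apply: in_slot_offdiag; side.
by apply: in_slot_offdiag; try side; move=> [] /val_inj.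
Qed.

End Generation.

Hypothesis a_neq0 : forall k, a k != 0.
Hypothesis a_sep : forall k j : 'I_K, k != j -> a k != a j /\ a k != (a j)^-1.
Hypothesis a_first : forall k : 'I_K, val k = 0%N -> a k = -1.
Hypothesis a_neq1 : forall k : 'I_K, val k <> 0%N -> a k != 1.

Let rg2 : rg 2. Proof. by side. Qed.

Lemma in_image_B11 : in_image (fun k => (1 + (a k)^-1) *: unitB 1 1).
Proof.
have := in_image_mxbr (in_image_unitA rg1 rg2 ltac:(lia))
  (in_image_mxbr (in_image_unitA rg2 rgn ltac:(lia)) (in_image_e rgn)).
apply: in_image_ext => k; rewrite psi_e_last mxbr_unitA_Bpair; try side.
by rewrite mxbr_unitA_Bpair ?scalerDl ?scale1r; try side.
Qed.

Lemma in_image_C11 : in_image (fun k => (1 + a k) *: unitC 1 1).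
Proof.
have := in_image_mxbr (in_image_unitA rg2 rg1 ltac:(lia))
  (in_image_mxbr (in_image_unitA rgn rg2 ltac:(lia)) (in_image_f rgn)).
apply: in_image_ext => k; rewrite psi_f_last mxbr_unitA_Cpair; try side.
by rewrite mxbrNr mxbr_unitA_Cpair ?opprK ?scalerDl ?scale1r; try side.
Qed.

Lemma in_image_skewB : in_image (fun k => (1 - (a k)^-1) *: skewB n 1).
Proof.
have := in_imageD (in_imageZ 2%:R (in_image_e rgn))
  (in_imageZ (-1) (in_image_mxbr (in_image_unitA rgn rg1 ltac:(lia)) in_image_B11)).
apply: in_image_ext => k.
by rewrite psi_e_last mxbrZr scaleN1r -skewB_of_Bpair //; lia.
Qed.

Definition sep_value k := (1 + a k) * (1 + (a k)^-1).

Lemma in_image_B11_mul psi : in_image (fun k => psi k *: unitB 1 1) ->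
  in_image (fun k => (2%:R * sep_value k * psi k) *: unitB 1 1).
Proof.
move=> h; apply: in_image_ext (in_image_mxbr (in_image_mxbr h in_image_C11) in_image_B11) => k.
rewrite !(mxbrZl, mxbrZr) mxbr_B11_C11 // mxbr_H11_B11 // !scalerA /sep_value.
by congr (_ *: _); ring.
Qed.

Lemma in_image_skewB_mul psi : in_image (fun k => psi k *: skewB n 1) ->
  in_image (fun k => (sep_value k * psi k) *: skewB n 1).
Proof.
move=> h; apply: in_image_ext (in_image_mxbr (in_image_mxbr h in_image_C11) in_image_B11) => k.
rewrite !(mxbrZl, mxbrZr) mxbr_skewB_C11; try side.
rewrite mxbr_Emx_B11; try side.
by rewrite !scalerA /sep_value; congr (_ *: _); ring.
Qed.

Lemma sep_value_inj j k : j != k -> sep_value j != sep_value k.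
Proof.
move=> jk; have [ne inv] := a_sep jk.
apply/eqP => /(add_inv_inj (a_neq0 j) (a_neq0 k)) [e|e]; first by rewrite e eqxx in ne.
by case/negP: inv; apply/eqP/(mulIf (a_neq0 k)); rewrite e mulVf.
Qed.

Lemma a_neq_m1 k : val k <> 0%N -> a k != -1.
Proof.
move=> k_neq0; pose k0 : 'I_K := Ordinal (leq_ltn_trans (leq0n k) (ltn_ord k)).
have kk0 : k != k0 by apply/eqP => /(congr1 val).
by have [+ _] := a_sep kk0; rewrite [a k0]a_first.
Qed.

Section RestSlots.
Variable k : 'I_K.
Hypothesis k_neq0 : val k <> 0%N.

Lemma in_slot_B11 : in_slot k (unitB 1 1).
Proof.
apply: (in_slot_separate (u := fun j => 2%:R * sep_value j) in_image_B11 in_image_B11_mul).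
  by rewrite add1_inv_neq0 ?a_neq_m1.
by move=> j jk; apply: contraNneq (sep_value_inj jk) => /(mulfI _) -> //; rewrite pnatr_eq0.
Qed.

Lemma in_slot_skewB1 : in_slot k (skewB n 1).
Proof.
apply: (in_slot_separate (u := sep_value) in_image_skewB in_image_skewB_mul).
  by rewrite sub1_inv_neq0 ?a_neq1.
by move=> j jk; apply: sep_value_inj.
Qed.

Lemma in_slot_C11 : in_slot k (unitC 1 1).
Proof.
have := in_slot_mxbrr (in_slot_mxbrr in_slot_B11 in_image_C11) in_image_C11.
rewrite !(mxbrZl, mxbrZr) mxbr_B11_C11 // mxbr_H11_C11 // !scalerA; set c := _ * _ => h.
have nz : c != 0 by rewrite !mulf_neq0 ?oppr_eq0 ?pnatr_eq0 // addrC addr_eq0 a_neq_m1.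
by have := in_slotZ c^-1 h; rewrite scalerA mulVf ?scale1r.
Qed.

Lemma in_slot_rest X : \tr X = 0 -> in_slot k X.
Proof. exact: in_slot_traceless in_slot_B11 in_slot_skewB1 in_slot_C11 X. Qed.

End RestSlots.

Section FirstSlot.
Variable k : 'I_K.
Hypothesis k_eq0 : val k = 0%N.
Local Notation mirror := (mirror n).

Lemma in_slot_first F : in_image F -> (forall j, val j <> 0%N -> \tr (F j) = 0) ->
  in_slot k (F k).
Proof.
move=> hF htr; apply: (in_slot_of_others (k := k) hF) => j jk.
have j0 : val j <> 0%N by move=> j0; case/eqP: jk; apply: val_inj; rewrite /= j0 k_eq0.
by apply: (in_slot_rest j0); apply: htr.
Qed.

Lemma in_slot_first_unitA p q : rg p -> rg q -> p <> q -> in_slot k (unitA p q).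
Proof.
move=> hp hq pq; apply: (in_slot_first (F := fun _ => unitA p q)) => [|j _].
  exact: in_image_unitA.
by rewrite /unitA raddfB /= !tr_Emx ?subrr //; lia.
Qed.

Lemma in_slot_first_skewB : in_slot k (skewB n 1).
Proof.
have := in_slot_first (in_image_e rgn) (fun j _ => tr_psi_e (a j) rgn).
by rewrite psi_e_last a_first // invrN1 scaleN1r.
Qed.

Lemma in_slot_first_skewC : in_slot k (skewC 1 n).
Proof.
have := in_slot_first (in_image_f rgn) (fun j _ => tr_psi_f (a j) rgn).
by rewrite psi_f_last a_first // scaleN1r.
Qed.

Lemma in_slot_first_diag p : rg p -> in_slot k (E p p - E (n + p) (n + p)).
Proof.
move=> hp; have [q [hq qp _]] := third_index p p.
have := in_slotZ 2%:R^-1 (in_slotD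
  (in_slot_mxbr (in_slot_first_unitA hp hq (nesym qp)) (in_slot_first_unitA hq hp qp))
  (in_slot_mxbr (in_slot_skewB in_slot_first_skewB hp hq)
                (in_slot_skewC in_slot_first_skewC hq hp))).
by rewrite mxbr_unitA_skew_cartan ?scalerA ?mulVf ?scale1r ?pnatr_eq0 //; lia.
Qed.

Lemma in_slot_first_mirror i j : (1 <= i <= N)%N -> (1 <= j <= N)%N ->
  in_slot k (E i j - E (mirror j) (mirror i)).
Proof.
have hN : N = (n + n)%N by rewrite addnn.
move=> hi hj; case: (leqP i n) => hin; case: (leqP j n) => hjn.
- rewrite -unitA_mirror; try side.
  case: (i =P j) => [<-|ij]; last by apply: in_slot_first_unitA; side.
  by rewrite /unitA; apply: in_slot_first_diag; side.
- have -> : j = (n + (j - n))%N by lia.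
  by rewrite -skewB_mirror; try side; apply: (in_slot_skewB in_slot_first_skewB); side.
- have -> : i = (n + (i - n))%N by lia.
  by rewrite -skewC_mirror; try side; apply: (in_slot_skewC in_slot_first_skewC); side.
- have -> : i = (n + (i - n))%N by lia.
  have -> : j = (n + (j - n))%N by lia.
  rewrite (mirror_hi (_ : n < n + (i - n))%N) ?(mirror_hi (_ : n < n + (j - n))%N) ?addKn; try lia.
  rewrite -opprB; apply: in_slotN.
  case: (i - n =P j - n)%N => [<-|ij]; first by apply: in_slot_first_diag; side.
  rewrite (_ : _ - _ = unitA (j - n) (i - n)); last by rewrite /unitA.
  by apply: in_slot_first_unitA; side.
Qed.

Lemma in_slot_first_J_skew y : @J_skew R n y -> in_slot k y.
Proof.
move=> /J_skew_decomp ->; apply/in_slotZ/in_slot_sum => r _; apply/in_slot_sum => c _.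
by apply/in_slotZ/in_slot_first_mirror; rewrite ltn_ord.
Qed.

End FirstSlot.

Definition J_blocks (x : tup R K N) :=
  forall k : 'I_K, if val k == 0%N then @J_skew R n (x k) else \tr (x k) = 0.

Lemma J_blocks_psi_image x : psi_image a x -> J_blocks x.
Proof.
elim=> {x} [x [i hi gen_x] k | k | x y _ hx _ hy k | c x _ hx k | x y _ hx _ hy k];
  rewrite ?ffunE.
- case: gen_x => ->; rewrite ffunE; case: ifP => [/eqP/a_first ->|_].
  + exact: J_skew_psi_e.
  + exact: tr_psi_e.
  + exact: J_skew_psi_f.
  + exact: tr_psi_f.
  + by rewrite psi_hE; apply: J_skew_mxbr; [apply: J_skew_psi_e | apply: J_skew_psi_f].
  + by rewrite psi_hE tr_mxbr.
- by case: ifP => _; [exact: J_skew0 | exact: mxtrace0].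
- move: (hx k) (hy k); case: ifP => _; first exact: J_skewD.
  by rewrite mxtraceD => -> ->; rewrite addr0.
- move: (hx k); case: ifP => _; first exact: J_skewZ.
  by rewrite mxtraceZ => ->; rewrite mulr0.
- move: (hx k) (hy k); case: ifP => _; first exact: J_skew_mxbr.
  by rewrite tr_mxbr.
Qed.

Lemma psi_image_J_blocks x : J_blocks x -> psi_image a x.
Proof.
move=> hx; have : in_image (fun k => x k).
  apply: in_image_of_slots => k; move: (hx k); case: (boolP (val k == 0%N)) => [/eqP k0|/eqP k0].
    exact: in_slot_first_J_skew.
  exact: in_slot_rest.
by rewrite /in_image (_ : [ffun k => x k] = x) //; apply/ffunP => k; rewrite ffunE.
Qed.

End Image.

Section ConjugateAt.
Variables (R : realType) (K N : nat) (first : pred 'I_K).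
Local Notation tup := (tup R K N).

Definition conj_at (P Q : 'M[R[i]]_N) (x : tup) : tup :=
  [ffun k => if first k then P *m x k *m Q else x k].

Lemma lie_iso_conj_at (P Q : 'M[R[i]]_N) (S T : tup -> Prop) : Q *m P = 1%:M ->
  (forall x, S x -> T (conj_at P Q x)) -> (forall z, T z -> S (conj_at Q P z)) ->
  lie_iso S T.
Proof.
move=> QP ST TS; have PQ := mulmx1C QP.
have conjK A B : A *m B = 1%:M -> forall x, conj_at A B (conj_at B A x) = x.
  move=> AB x; apply/ffunP => k; rewrite !ffunE; case: (first k) => //.
  by rewrite !mulmxA AB mul1mx -mulmxA AB mulmx1.
exists (conj_at P Q); split => //.
- move=> c x y _ _; apply/ffunP => k; rewrite !ffunE; case: ifP => // _.
  by rewrite mulmxDr mulmxDl -scalemxAr -scalemxAl.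
- move=> x y _ _; apply/ffunP => k; rewrite !ffunE; case: ifP => // _.
  by rewrite mulmxBr mulmxBl !mulmxA -!(mulmxA _ Q P) QP !mulmx1.
- by move=> x y _ _ /(congr1 (conj_at Q P)); rewrite !(conjK _ _ QP).
- by move=> z /TS Sz; exists (conj_at Q P z); rewrite ?(conjK _ _ PQ).
Qed.

End ConjugateAt.

Unset Implicit Arguments.

Theorem lemma5p4 (R : realType) (n K : nat) (a : 'I_K -> R[i]) :
  (3 <= n)%N -> (1 <= K)%N ->
  (forall k, a k != 0) ->
  (forall k j : 'I_K, k != j -> a k != a j /\ a k != (a j)^-1) ->
  (forall k : 'I_K, val k = 0%N -> a k = -1) ->
  (forall k : 'I_K, val k <> 0%N -> a k != 1) ->
  lie_iso (@psi_image R n K a) (@so_sl_sum R n K).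
Proof.
move=> n_ge3 _ a_neq0 a_sep a_first a_neq1.
apply: (@lie_iso_conj_at _ _ _ (fun k => val k == 0%N) (Qmx R n) (Qinv R n)).
- exact: mulQinvQ.
- move=> x /(J_blocks_psi_image a_first) hx k; move: (hx k); rewrite ffunE.
  by case: ifP => // _; apply: J_skew_conj.
- move=> z hz; apply: (psi_image_J_blocks n_ge3 a_neq0 a_sep a_first a_neq1) => k.
  by move: (hz k); rewrite ffunE; case: ifP => // _; apply: skew_conj.
Qed.
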